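(* Let $X$ be a Banach space, $k\in\mathbb{N}$, and let $(e_n)_n\in\mathcal{SM}_k(X)$ be a Schauder basic sequence; let $E$ be the Banach space with Schauder basis $(e_n)_n$. Let $d\in\mathbb{N}$ and let $(\widetilde e_n)_n$ be a plegma block generated $d$-spreading model of $E$. Then $(\widetilde e_n)_n\in\mathcal{SM}_{k+d}(X)$.
   Context: $[M]^k$: $k$-subsets of $M\subseteq\mathbb{N}$ (increasing enumerations, $M(l)$ the $l$-th element of $M$). A $k$-sequence in $X$ is a map $[\mathbb{N}]^k\to X$, $s\mapsto x_s$. Plegma family: $(s_j)_{j=1}^l$ in $[M]^k$ with $s_1(i)<\dots<s_l(i)$ for all $i\le k$ and $s_l(i)<s_1(i+1)$ for $i<k$; a plegma pair is a plegma family of length 2. $(x_s)_{s\in[M]^k}$ generates the Hamel basis $(e_n)$ of a seminormed space $(E,\|\cdot\|_* )$ as a $k$-spreading model if for some null sequence $\delta_l>0$: $|\|\sum_{j=1}^m a_jx_{s_j}\|-\|\sum_{j=1}^m a_je_j\|_*|\le\delta_l$ for all $m\le l$, plegma $(s_j)_{j=1}^m$ in $[M]^k$ with $s_1(1)\ge M(l)$, $a_j\in[-1,1]$. $\mathcal{SM}_k(X)$ is the set of all sequences generated in this way by some $k$-sequence in $X$ and some infinite $M$. For a Banach space $Y$ with a Schauder basis, a $d$-sequence $(y_t)_{t\in[\mathbb{N}]^d}$ is plegma block if the $y_t$ are finitely supported and $\mathrm{supp}(y_{t_1})<\mathrm{supp}(y_{t_2})$ (i.e. $\max<\min$) for every plegma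 pair $(t_1,t_2)$ in $[\mathbb{N}]^d$; a $d$-spreading model of $Y$ is plegma block generated if it is generated by some plegma block $d$-sequence. *)

From Stdlib Require Import Reals Lra List.
Import ListNotations.
Open Scope R_scope.

Record BanachSpace := {
  carrier :> Type;
  vzero : carrier;
  vadd : carrier -> carrier -> carrier;
  vscal : R -> carrier -> carrier;
  vnorm : carrier -> R;
  vadd_assoc : forall x y z, vadd x (vadd y z) = vadd (vadd x y) z;
  vadd_comm : forall x y, vadd x y = vadd y x;
  vadd_zero : forall x, vadd x vzero = x;
  vadd_opp : forall x, vadd x (vscal (-1) x) = vzero;
  vscal_one : forall x, vscal 1 x = x;
  vscal_assoc : forall a b x, vscal a (vscal b x) = vscal (a * b) x;
  vscal_distr_v : forall a x y, vscal a (vadd x y) = vadd (vscal a x) (vscal a y);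
  vscal_distr_s : forall a b x, vscal (a + b) x = vadd (vscal a x) (vscal b x);
  vnorm_nonneg : forall x, 0 <= vnorm x;
  vnorm_def : forall x, vnorm x = 0 -> x = vzero;
  vnorm_scal : forall a x, vnorm (vscal a x) = Rabs a * vnorm x;
  vnorm_triangle : forall x y, vnorm (vadd x y) <= vnorm x + vnorm y;
  complete : forall u : nat -> carrier,
    (forall eps, 0 < eps -> exists n0, forall n m, (n0 <= n)%nat -> (n0 <= m)%nat ->
        vnorm (vadd (u n) (vscal (-1) (u m))) < eps) ->
    exists x, forall eps, 0 < eps -> exists n0, forall n, (n0 <= n)%nat ->
        vnorm (vadd (u n) (vscal (-1) x)) < eps
}.

Fixpoint lincomb (X : BanachSpace) (m : nat) (a : nat -> R) (v : nat -> X) : X :=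
  match m with
  | O => vzero X
  | S m' => vadd X (lincomb X m' a v) (vscal X (a m') (v m'))
  end.

(* A vector sum_n f n e_n of the span of (e_n) is encoded by its finitely supported
   coefficient sequence f; a seminorm ||.||_* on the space with Hamel basis (e_n)
   is encoded as a function N on such sequences. *)
Definition finsupp (f : nat -> R) : Prop :=
  exists n0, forall n, (n0 <= n)%nat -> f n = 0.

Definition is_seminorm (N : (nat -> R) -> R) : Prop :=
  (forall f g, finsupp f -> finsupp g -> N (fun n => f n + g n) <= N f + N g) /\
  (forall c f, finsupp f -> N (fun n => c * f n) = Rabs c * N f).

Definition unitv (n : nat) : nat -> R := fun i => if Nat.eqb i n then 1 else 0.

Definition trunc (m : nat) (a : nat -> R) : nat -> R :=
  fun i => if Nat.ltb i m then a i else 0.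

Fixpoint lincombf (m : nat) (a : nat -> R) (v : nat -> (nat -> R)) : nat -> R :=
  match m with
  | O => fun _ => 0
  | S m' => fun i => lincombf m' a v i + a m' * v m' i
  end.

(* (e_n) is a Schauder basic sequence w.r.t. the seminorm N (Grunblum criterion) *)
Definition schauder_basic (N : (nat -> R) -> R) : Prop :=
  (forall n, 0 < N (unitv n)) /\
  exists K, forall (a : nat -> R) (m n : nat), (m <= n)%nat ->
    N (trunc m a) <= K * N (trunc n a).

(* An infinite M subset of nat is given by its strictly increasing enumeration
   M : nat -> nat; the paper's M(l) (l >= 1) is M (l-1). *)
Definition strictly_increasing (M : nat -> nat) : Prop :=
  forall i j, (i < j)%nat -> (M i < M j)%nat.

(* a k-subset s of nat, as its increasing enumeration; s(i) (paper, i>=1) = nth (i-1) s 0 *)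
Definition kset_in (M : nat -> nat) (k : nat) (s : list nat) : Prop :=
  length s = k /\
  (forall i, (S i < k)%nat -> (nth i s 0 < nth (S i) s 0%nat)%nat) /\
  (forall i, (i < k)%nat -> exists l, nth i s 0%nat = M l).

Definition plegma (M : nat -> nat) (k m : nat) (s : nat -> list nat) : Prop :=
  (forall j, (j < m)%nat -> kset_in M k (s j)) /\
  (forall i j, (i < k)%nat -> (S j < m)%nat -> (nth i (s j) 0 < nth i (s (S j)) 0%nat)%nat) /\
  ((0 < m)%nat -> forall i, (S i < k)%nat ->
      (nth i (s (pred m)) 0 < nth (S i) (s 0%nat) 0%nat)%nat).

(* F m a s stands for || sum_{j<m} a_j x_{s_j} ||. *)
Definition generates_SM (k : nat) (M : nat -> nat)
  (F : nat -> (nat -> R) -> (nat -> list nat) -> R) (N : (nat -> R) -> R) : Prop :=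
  exists delta : nat -> R,
    (forall l, 0 < delta l) /\ Un_cv delta 0 /\
    forall (l m : nat) (s : nat -> list nat) (a : nat -> R),
      (1 <= l)%nat -> (m <= l)%nat -> plegma M k m s ->
      (M (pred l) <= nth 0 (s 0%nat) 0%nat)%nat ->
      (forall j, (j < m)%nat -> -1 <= a j <= 1) ->
      Rabs (F m a s - N (trunc m a)) <= delta l.

Definition in_SM (k : nat) (X : BanachSpace) (N : (nat -> R) -> R) : Prop :=
  is_seminorm N /\
  exists (x : list nat -> X) (M : nat -> nat),
    strictly_increasing M /\
    generates_SM k M (fun m a s => vnorm X (lincomb X m a (fun j => x (s j)))) N.

(* plegma block d-sequence in E (E = completion of the span of (e_n) under N);
   finitely supported vectors of E are exactly the finitely supported
   coefficient sequences. *)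
Definition plegma_block (d : nat) (y : list nat -> (nat -> R)) : Prop :=
  (forall t, kset_in (fun n => n) d t -> finsupp (y t)) /\
  (forall t1 t2, plegma (fun n => n) d 2 (fun j => if Nat.eqb j 0 then t1 else t2) ->
     forall n1 n2, y t1 n1 <> 0 -> y t2 n2 <> 0 -> (n1 < n2)%nat).

Definition plegma_block_generated_SM (d : nat) (N Nt : (nat -> R) -> R) : Prop :=
  is_seminorm Nt /\
  exists (y : list nat -> (nat -> R)) (M : nat -> nat),
    plegma_block d y /\ strictly_increasing M /\
    generates_SM d M (fun m a t => N (lincombf m a (fun j => y (t j)))) Nt.

(* Split each (k+d)-set u into its first d coordinates t and its last k coordinates
   (the tail).  For a plegma family (u_j)_{j<m} in [N]^{k+d}, the sets M2[t_j] form a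
   plegma family in [M2]^d, so the vectors y_{M2[t_j]} are successive blocks.  Every
   entry of every t_j lies below the first tail coordinate a of u_0, and there are only
   finitely many d-sets below a, so all these blocks are supported in [0, B(a)) with
   coefficients bounded by B(a).
   Put x'_u := sum_{n < B(b)} y_{M2[t]}(n) x_{sigma(u,n)}, b the first tail coordinate
   of u, where the k-sets sigma(u,n) are read off the tail of u through M, in windows
   of length B placed beyond an index L(a) at which the spreading-model error of x is
   below 1 / ((B(a)+1)(a+1)).  Since the blocks are disjoint,
   sum_j a_j x'_{u_j} = sum_n (a_{J n} y_{M2[t_{J n}]}(n)) x_{sigma(u_{J n}, n)}, with
   J n the block owning n, and the sets sigma(u_{J n}, n) form a plegma family in [M]^k.
   Hence ||sum_j a_j x'_{u_j}|| is within 1/(l+1) of ||sum_j a_j y_{M2[t_j]}||, which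
   is within delta'_l of ||sum_j a_j e~_j||. *)

From Stdlib Require Import Reals List Lra Lia.
From Stdlib Require Import FunctionalExtensionality IndefiniteDescription Classical.
Open Scope R_scope.

Section VectorSums.

Variable X : BanachSpace.

Fixpoint vsum (m : nat) (f : nat -> X) : X :=
  match m with
  | O => vzero X
  | S m' => vadd X (vsum m' f) (f m')
  end.

Lemma lincomb_vsum m a v : lincomb X m a v = vsum m (fun j => vscal X (a j) (v j)).
Proof. induction m as [|m IH]; simpl; congruence. Qed.

Lemma vscal_0_l x : vscal X 0 x = vzero X.
Proof. apply vnorm_def. rewrite vnorm_scal, Rabs_R0. ring. Qed.

Lemma vnorm_vzero : vnorm X (vzero X) = 0.
Proof. rewrite <- (vscal_0_l (vzero X)), vnorm_scal, Rabs_R0. ring. Qed.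

Lemma vscal_vzero c : vscal X c (vzero X) = vzero X.
Proof. apply vnorm_def. rewrite vnorm_scal, vnorm_vzero. ring. Qed.

Lemma vadd_vzero_l x : vadd X (vzero X) x = x.
Proof. rewrite vadd_comm. apply vadd_zero. Qed.

Lemma vadd_ACA x y z w :
  vadd X (vadd X x y) (vadd X z w) = vadd X (vadd X x z) (vadd X y w).
Proof. rewrite <- !vadd_assoc. f_equal. rewrite !vadd_assoc. f_equal. apply vadd_comm. Qed.

Lemma vsum_ext m f g : (forall j, (j < m)%nat -> f j = g j) -> vsum m f = vsum m g.
Proof.
  induction m as [|m IH]; intros H; simpl; [reflexivity|].
  rewrite IH by (intros; apply H; lia). rewrite H by lia. reflexivity.
Qed.

Lemma vsum_vzero m : vsum m (fun _ => vzero X) = vzero X.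
Proof. induction m as [|m IH]; simpl; [|rewrite IH]; auto using vadd_zero. Qed.

Lemma vsum_add m f g :
  vsum m (fun n => vadd X (f n) (g n)) = vadd X (vsum m f) (vsum m g).
Proof.
  induction m as [|m IH]; simpl; [symmetry; apply vadd_zero|].
  rewrite IH. apply vadd_ACA.
Qed.

Lemma vscal_vsum m c f : vscal X c (vsum m f) = vsum m (fun n => vscal X c (f n)).
Proof.
  induction m as [|m IH]; simpl; [apply vscal_vzero|].
  rewrite vscal_distr_v, IH. reflexivity.
Qed.

Lemma vsum_single m f j0 : (j0 < m)%nat ->
  (forall j, (j < m)%nat -> j <> j0 -> f j = vzero X) -> vsum m f = f j0.
Proof.
  induction m as [|m IH]; intros Hj0 H; [lia|]. simpl.
  destruct (Nat.eq_dec j0 m) as [->|Hne].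
  - rewrite (vsum_ext m f (fun _ => vzero X)) by (intros; apply H; lia).
    rewrite vsum_vzero. apply vadd_vzero_l.
  - rewrite IH by (try lia; intros; apply H; lia). rewrite (H m) by lia. apply vadd_zero.
Qed.

Lemma vsum_widen p q f : (forall n, (p <= n)%nat -> f n = vzero X) -> (p <= q)%nat ->
  vsum q f = vsum p f.
Proof.
  intros H Hpq. induction Hpq as [|q Hpq IH]; simpl; [reflexivity|].
  rewrite IH, H by lia. apply vadd_zero.
Qed.

Lemma vsum_exchange m p (h : nat -> nat -> X) :
  vsum m (fun j => vsum p (h j)) = vsum p (fun n => vsum m (fun j => h j n)).
Proof.
  induction m as [|m IH]; simpl; [symmetry; apply vsum_vzero|].
  rewrite IH, <- vsum_add. reflexivity.
Qed.

End VectorSums.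

Lemma lincombf_eq0 m a v i : (forall j, (j < m)%nat -> v j i = 0) -> lincombf m a v i = 0.
Proof.
  induction m as [|m IH]; intros H; simpl; [reflexivity|].
  rewrite IH by (intros; apply H; lia). rewrite (H m) by lia. ring.
Qed.

Lemma lincombf_single m a v i j0 : (j0 < m)%nat ->
  (forall j, (j < m)%nat -> j <> j0 -> v j i = 0) -> lincombf m a v i = a j0 * v j0 i.
Proof.
  induction m as [|m IH]; intros Hj0 H; [lia|]. simpl.
  destruct (Nat.eq_dec j0 m) as [->|Hne].
  - rewrite lincombf_eq0 by (intros; apply H; lia). ring.
  - rewrite IH by (try lia; intros; apply H; lia). rewrite (H m) by lia. ring.
Qed.

Lemma seminorm_trunc0 (N : (nat -> R) -> R) a : is_seminorm N -> N (trunc 0 a) = 0.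
Proof.
  intros [_ Hhom].
  replace (trunc 0 a) with (fun n : nat => 0 * (fun _ : nat => 0) n)
    by (apply functional_extensionality; intros n; unfold trunc; simpl; ring).
  rewrite Hhom by (exists 0%nat; auto). rewrite Rabs_R0. ring.
Qed.

Lemma chain_lt (f : nat -> nat) K : (forall i, (S i < K)%nat -> (f i < f (S i))%nat) ->
  forall i i', (i < i')%nat -> (i' < K)%nat -> (f i < f i')%nat.
Proof.
  intros H i i' Hlt. induction Hlt as [|i' Hle IH]; intros HK; [apply H; lia|].
  specialize (IH ltac:(lia)). specialize (H i' HK). lia.
Qed.

Lemma chain_le (f : nat -> nat) K : (forall i, (S i < K)%nat -> (f i < f (S i))%nat) ->
  forall i i', (i <= i')%nat -> (i' < K)%nat -> (f i <= f i')%nat.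
Proof.
  intros H i i' Hle HK. destruct (proj1 (Nat.lt_eq_cases i i') Hle) as [Hlt| ->]; [|lia].
  apply Nat.lt_le_incl, (chain_lt f K H); assumption.
Qed.

Lemma strictly_increasing_le M i j : strictly_increasing M -> (i <= j)%nat -> (M i <= M j)%nat.
Proof.
  intros HM Hij. destruct (proj1 (Nat.lt_eq_cases i j) Hij) as [Hlt| ->]; [|lia].
  apply Nat.lt_le_incl, HM, Hlt.
Qed.

Lemma kset_in_id M K t : kset_in M K t -> kset_in (fun n => n) K t.
Proof. intros [Hlen [Hinc _]]. split; [exact Hlen|split; [exact Hinc|]]. intros i _; eauto. Qed.

Section Plegma.

Variables (M : nat -> nat) (K m : nat) (s : nat -> list nat).
Hypothesis hs : plegma M K m s.

Lemma plegma_row_lt j i i' : (j < m)%nat -> (i < i')%nat -> (i' < K)%nat ->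
  (nth i (s j) 0 < nth i' (s j) 0)%nat.
Proof. intros Hj. apply (chain_lt (fun i => nth i (s j) 0%nat) K), (proj1 hs j Hj). Qed.

Lemma plegma_row_le j i i' : (j < m)%nat -> (i <= i')%nat -> (i' < K)%nat ->
  (nth i (s j) 0 <= nth i' (s j) 0)%nat.
Proof. intros Hj. apply (chain_le (fun i => nth i (s j) 0%nat) K), (proj1 hs j Hj). Qed.

Lemma plegma_col_lt i j j' : (i < K)%nat -> (j < j')%nat -> (j' < m)%nat ->
  (nth i (s j) 0 < nth i (s j') 0)%nat.
Proof. intros Hi. apply (chain_lt (fun j => nth i (s j) 0%nat) m). intros; apply hs; auto. Qed.

Lemma plegma_col_le i j j' : (i < K)%nat -> (j <= j')%nat -> (j' < m)%nat ->
  (nth i (s j) 0 <= nth i (s j') 0)%nat.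
Proof. intros Hi. apply (chain_le (fun j => nth i (s j) 0%nat) m). intros; apply hs; auto. Qed.

Lemma plegma_cross_lt i j j' : (S i < K)%nat -> (j < m)%nat -> (j' < m)%nat ->
  (nth i (s j) 0 < nth (S i) (s j') 0)%nat.
Proof.
  intros Hi Hj Hj'.
  pose proof (proj2 (proj2 hs) ltac:(lia) i Hi).
  pose proof (plegma_col_le i j (pred m) ltac:(lia) ltac:(lia) ltac:(lia)).
  pose proof (plegma_col_le (S i) 0 j' Hi ltac:(lia) Hj'). lia.
Qed.

Lemma plegma_pair j j' : (j < j')%nat -> (j' < m)%nat ->
  plegma (fun n => n) K 2 (fun q => if Nat.eqb q 0 then s j else s j').
Proof.
  intros Hjj' Hj'. split; [|split].
  - intros q Hq. apply (kset_in_id M).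
    destruct q as [|[|q]]; [apply (proj1 hs)|apply (proj1 hs)|]; lia.
  - intros i q Hi Hq. destruct q as [|q]; [|lia]. apply plegma_col_lt; auto.
  - intros _ i Hi. apply plegma_cross_lt; auto; lia.
Qed.

End Plegma.

Definition prefix (d : nat) (v : list nat) : list nat := map (fun i => nth i v 0%nat) (seq 0 d).

Lemma nth_map_seq (f : nat -> nat) n i : (i < n)%nat -> nth i (map f (seq 0 n)) 0%nat = f i.
Proof.
  intros Hi. rewrite nth_indep with (d' := f 0%nat) by (rewrite length_map, length_seq; lia).
  rewrite map_nth, seq_nth by lia. reflexivity.
Qed.

Lemma nth_map_prefix (f : nat -> nat) d v i : (i < d)%nat ->
  nth i (map f (prefix d v)) 0%nat = f (nth i v 0%nat).
Proof. intros Hi. unfold prefix. rewrite map_map. apply (nth_map_seq (fun i => f (nth i v 0%nat))), Hi. Qed.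

Lemma plegma_map_prefix (M2 : nat -> nat) K d m u : strictly_increasing M2 -> (d <= K)%nat ->
  plegma (fun n => n) K m u -> plegma M2 d m (fun j => map M2 (prefix d (u j))).
Proof.
  intros HM2 HdK [Hsets [Hcol Hcross]]. split; [|split].
  - intros j Hj. split; [|split].
    + unfold prefix. rewrite !length_map, length_seq. reflexivity.
    + intros i Hi. rewrite !nth_map_prefix by lia. apply HM2, (Hsets j Hj); lia.
    + intros i Hi. exists (nth i (u j) 0%nat). apply nth_map_prefix, Hi.
  - intros i j Hi Hj. rewrite !nth_map_prefix by lia. apply HM2, Hcol; lia.
  - intros Hm i Hi. rewrite !nth_map_prefix by lia. apply HM2, Hcross; lia.
Qed.

Definition upward_closed {A : Type} (P : A -> nat -> Prop) : Prop :=
  forall r b b', P r b -> (b <= b')%nat -> P r b'.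

Lemma finite_uniform_bound (P : nat -> nat -> Prop) : upward_closed P ->
  (forall z, exists b, P z b) -> forall a, exists b, forall z, (z < a)%nat -> P z b.
Proof.
  intros Hup H a. induction a as [|a [b Hb]]; [exists 0%nat; intros; lia|].
  destruct (H a) as [b' Hb']. exists (Nat.max b b'). intros z Hz.
  destruct (Nat.eq_dec z a) as [->|Hne].
  - apply Hup with b'; [exact Hb'|lia].
  - apply Hup with b; [apply Hb; lia|lia].
Qed.

Lemma lists_uniform_bound d (P : list nat -> nat -> Prop) : upward_closed P ->
  (forall r, exists b, P r b) ->
  forall a, exists b, forall r, length r = d -> Forall (fun z => (z < a)%nat) r -> P r b.
Proof.
  revert P. induction d as [|d IH]; intros P Hup H a.
  - destruct (H nil) as [b Hb]. exists b. intros [|z r] Hr _; [exact Hb|discriminate].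
  - destruct (finite_uniform_bound
      (fun z b => forall r, length r = d -> Forall (fun z => (z < a)%nat) r -> P (z :: r) b))
      with (a := a) as [b Hb].
    + intros z b b' Hb Hle r Hr Ha. apply Hup with b; auto.
    + intros z. apply (IH (fun r b => P (z :: r) b)); [|auto].
      intros r b b' Hb Hle. apply Hup with b; auto.
    + exists b. intros [|z r] Hr Ha; [discriminate|].
      apply Forall_cons_iff in Ha as [Hz Ha]. apply Hb; auto.
Qed.

Fixpoint running_max (f : nat -> nat) (a : nat) : nat :=
  match a with
  | O => f O
  | S a' => Nat.max (running_max f a') (f a)
  end.

Lemma running_max_ge f a : (f a <= running_max f a)%nat.
Proof. destruct a; simpl; lia. Qed.

Lemma running_max_mono f a a' : (a <= a')%nat -> (running_max f a <= running_max f a')%nat.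
Proof. intros H. induction H; simpl; lia. Qed.

Lemma lists_monotone_bound d (P : list nat -> nat -> Prop) : upward_closed P ->
  (forall r, exists b, P r b) ->
  exists B : nat -> nat, (forall a a', (a <= a')%nat -> (B a <= B a')%nat) /\
    forall a r, length r = d -> Forall (fun z => (z < a)%nat) r -> P r (B a).
Proof.
  intros Hup H.
  destruct (functional_choice _ (lists_uniform_bound d P Hup H)) as [B0 HB0].
  exists (running_max B0). split; [apply running_max_mono|].
  intros a r Hr Ha. apply Hup with (B0 a); [apply HB0; auto|apply running_max_ge].
Qed.

Definition bounded_by (f : nat -> R) (b : nat) : Prop :=
  forall n, (f n <> 0 -> (n < b)%nat) /\ Rabs (f n) <= INR b.

Lemma finsupp_bounded f : finsupp f -> exists b, bounded_by f b.
Proof.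
  intros [n0 Hn0].
  destruct (finite_uniform_bound (fun n b => Rabs (f n) <= INR b)) with (a := n0) as [b Hb].
  - intros n b b' Hb Hle. apply le_INR in Hle. lra.
  - intros n. destruct (INR_unbounded (Rabs (f n))) as [b Hb]. exists b. lra.
  - exists (Nat.max n0 b). intros n.
    assert (INR b <= INR (Nat.max n0 b)) by (apply le_INR; lia).
    destruct (Nat.lt_ge_cases n n0) as [Hn|Hn].
    + split; [lia|]. specialize (Hb n Hn). lra.
    + rewrite Hn0 by exact Hn. split; [intros []; reflexivity|].
      rewrite Rabs_R0. apply pos_INR.
Qed.

Lemma finsupp_family_bound d (f : list nat -> nat -> R) (Q : list nat -> Prop) :
  (forall r, Q r -> finsupp (f r)) ->
  exists B : nat -> nat, (forall a a', (a <= a')%nat -> (B a <= B a')%nat) /\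
    forall a r, length r = d -> Forall (fun z => (z < a)%nat) r -> Q r -> bounded_by (f r) (B a).
Proof.
  intros Hfin. apply (lists_monotone_bound d (fun r b => Q r -> bounded_by (f r) b)).
  - intros r b b' Hb Hle HQ n. destruct (Hb HQ n) as [Hsupp Hcoef].
    apply le_INR in Hle as HleR. split; [intros Hn; specialize (Hsupp Hn); lia|lra].
  - intros r. destruct (classic (Q r)) as [HQ|HQ].
    + destruct (finsupp_bounded _ (Hfin r HQ)) as [b Hb]. exists b. auto.
    + exists 0%nat. intros HQ'. contradiction.
Qed.

Lemma inv_succ_pos l : 0 < / INR (S l).
Proof. apply Rinv_0_lt_compat, lt_0_INR. lia. Qed.

Lemma inv_succ_cv0 : Un_cv (fun l => / INR (S l)) 0.
Proof.
  apply (cv_infty_cv_0 (fun l => INR (S l))). intros A.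
  destruct (INR_unbounded A) as [n Hn]. exists n. intros p Hp.
  apply Rlt_le_trans with (INR n); [lra|]. apply le_INR. lia.
Qed.

Lemma small_tail_choice (del : nat -> R) (B : nat -> nat) :
  (forall l, 0 < del l) -> Un_cv del 0 ->
  exists L : nat -> nat, forall a,
    (1 <= L a)%nat /\ (B a <= L a)%nat /\ (INR (B a) + 1) * del (L a) <= / INR (S a).
Proof.
  intros Hpos Hcv.
  apply (functional_choice (fun a L =>
    (1 <= L)%nat /\ (B a <= L)%nat /\ (INR (B a) + 1) * del L <= / INR (S a))).
  intros a.
  set (c := INR (B a) + 1).
  assert (Hc : 0 < c) by (unfold c; pose proof (pos_INR (B a)); lra).
  destruct (Hcv (/ INR (S a) / c)) as [l0 Hl0].
  { apply Rdiv_lt_0_compat; [apply inv_succ_pos|exact Hc]. }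
  exists (Nat.max l0 (Nat.max (B a) 1)). split; [lia|split; [lia|]].
  specialize (Hl0 (Nat.max l0 (Nat.max (B a) 1)) ltac:(lia)). unfold Rdist in Hl0.
  rewrite Rminus_0_r, Rabs_pos_eq in Hl0 by (apply Rlt_le, Hpos).
  apply Rmult_lt_compat_l with (r := c) in Hl0; [|exact Hc].
  replace (c * (/ INR (S a) / c)) with (/ INR (S a)) in Hl0
    by (field; split; [apply not_0_INR; lia|lra]). lra.
Qed.

Fixpoint spread (g h : nat -> nat) (a : nat) : nat :=
  match a with
  | O => h O
  | S a' => (spread g h a' + g a' + h a)%nat
  end.

Lemma spread_ge g h a : (h a <= spread g h a)%nat.
Proof. destruct a; simpl; lia. Qed.

Lemma spread_mono g h a a' : (a <= a')%nat -> (spread g h a <= spread g h a')%nat.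
Proof. intros H. induction H; simpl; lia. Qed.

Lemma spread_gap g h a a' n : (a < a')%nat -> (n < g a)%nat ->
  (spread g h a + n < spread g h a')%nat.
Proof. intros Ha Hn. pose proof (spread_mono g h (S a) a' Ha). simpl in H. lia. Qed.

Definition block_sequence (m : nat) (z : nat -> nat -> R) : Prop :=
  forall j j' n n', (j < j')%nat -> (j' < m)%nat -> z j n <> 0 -> z j' n' <> 0 -> (n < n')%nat.

Definition reached (f : nat -> R) (n : nat) : bool :=
  existsb (fun n' => if Req_EM_T (f n') 0 then false else true) (seq 0 (S n)).

Lemma reachedP f n : reached f n = true <-> exists n', (n' <= n)%nat /\ f n' <> 0.
Proof.
  unfold reached. rewrite existsb_exists. split.
  - intros [n' [Hin Hf]]. apply in_seq in Hin. exists n'.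
    destruct (Req_EM_T (f n') 0); [discriminate|split; [lia|assumption]].
  - intros [n' [Hle Hf]]. exists n'. split; [apply in_seq; lia|].
    destruct (Req_EM_T (f n') 0); [contradiction|reflexivity].
Qed.

Fixpoint max_below (m : nat) (g : nat -> nat) : nat :=
  match m with
  | O => O
  | S m' => Nat.max (max_below m' g) (g m')
  end.

Lemma max_below_ge m g j : (j < m)%nat -> (g j <= max_below m g)%nat.
Proof.
  induction m as [|m IH]; simpl; intros Hj; [lia|].
  destruct (Nat.eq_dec j m) as [->|Hne]; [lia|]. specialize (IH ltac:(lia)). lia.
Qed.

Lemma max_below_le m g b : (forall j, (j < m)%nat -> (g j <= b)%nat) -> (max_below m g <= b)%nat.
Proof.
  induction m as [|m IH]; simpl; intros H; [lia|].
  specialize (IH ltac:(intros; apply H; lia)). specialize (H m ltac:(lia)). lia.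
Qed.

Lemma max_below_mono m g g' : (forall j, (j < m)%nat -> (g j <= g' j)%nat) ->
  (max_below m g <= max_below m g')%nat.
Proof.
  induction m as [|m IH]; simpl; intros H; [lia|].
  specialize (IH ltac:(intros; apply H; lia)). specialize (H m ltac:(lia)). lia.
Qed.

(* The last block that has started by position [n]; for a block sequence it is the
   only one that can be nonzero at [n]. *)
Definition block_index (m : nat) (z : nat -> nat -> R) (n : nat) : nat :=
  max_below m (fun j => if reached (z j) n then j else 0%nat).

Section BlockIndex.

Variables (m : nat) (z : nat -> nat -> R).

Lemma block_index_lt n : (1 <= m)%nat -> (block_index m z n < m)%nat.
Proof.
  intros Hm. unfold block_index.
  enough (max_below m (fun j => if reached (z j) n then j else 0%nat) <= pred m)%nat by lia.
  apply max_below_le. intros j Hj. destruct (reached (z j) n); lia.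
Qed.

Lemma block_index_mono n n' : (n <= n')%nat -> (block_index m z n <= block_index m z n')%nat.
Proof.
  intros Hnn'. apply max_below_mono. intros j Hj.
  destruct (reached (z j) n) eqn:E; [|lia].
  apply reachedP in E as [n1 [Hn1 Hz]].
  replace (reached (z j) n') with true; [lia|].
  symmetry. apply reachedP. exists n1. split; [lia|exact Hz].
Qed.

Hypothesis hz : block_sequence m z.

Lemma block_index_spec j n : (j < m)%nat -> z j n <> 0 -> block_index m z n = j.
Proof.
  intros Hj Hz. apply Nat.le_antisymm.
  - apply max_below_le. intros j' Hj'. destruct (reached (z j') n) eqn:E; [|lia].
    apply reachedP in E as [n' [Hn' Hz']]. destruct (Nat.le_gt_cases j' j); [lia|].
    specialize (hz j j' n n' ltac:(lia) Hj' Hz Hz'). lia.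
  - assert (E : reached (z j) n = true) by (apply reachedP; exists n; auto).
    pose proof (max_below_ge m (fun j => if reached (z j) n then j else 0%nat) j Hj) as H.
    simpl in H. rewrite E in H. exact H.
Qed.

Lemma block_index_other j n : (j < m)%nat -> j <> block_index m z n -> z j n = 0.
Proof.
  intros Hj Hne. destruct (Req_EM_T (z j n) 0) as [E|E]; [exact E|].
  exfalso. apply Hne. symmetry. apply block_index_spec; assumption.
Qed.

End BlockIndex.

Section Lift.

Variables (X : BanachSpace) (k d : nat).
Hypotheses (hk : (1 <= k)%nat) (hd : (1 <= d)%nat).
Variables (N Nt : (nat -> R) -> R).
Hypothesis hN : is_seminorm N.

Variables (x : list nat -> X) (M : nat -> nat) (del : nat -> R).
Hypothesis hM : strictly_increasing M.
Hypothesis hx : forall l m s a, (1 <= l)%nat -> (m <= l)%nat -> plegma M k m s ->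
  (M (pred l) <= nth 0 (s 0%nat) 0)%nat -> (forall j, (j < m)%nat -> -1 <= a j <= 1) ->
  Rabs (vnorm X (lincomb X m a (fun j => x (s j))) - N (trunc m a)) <= del l.

Variables (y : list nat -> (nat -> R)) (M2 : nat -> nat) (del2 : nat -> R).
Hypothesis hy_block : forall t1 t2,
  plegma (fun n => n) d 2 (fun j => if Nat.eqb j 0 then t1 else t2) ->
  forall n1 n2, y t1 n1 <> 0 -> y t2 n2 <> 0 -> (n1 < n2)%nat.
Hypothesis hM2 : strictly_increasing M2.
Hypothesis hy : forall l m t a, (1 <= l)%nat -> (m <= l)%nat -> plegma M2 d m t ->
  (M2 (pred l) <= nth 0 (t 0%nat) 0)%nat -> (forall j, (j < m)%nat -> -1 <= a j <= 1) ->
  Rabs (N (lincombf m a (fun j => y (t j))) - Nt (trunc m a)) <= del2 l.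

Variables (B L : nat -> nat).
Hypothesis hB_mono : forall a a', (a <= a')%nat -> (B a <= B a')%nat.
Hypothesis hB : forall a r, length r = d -> Forall (fun z => (z < a)%nat) r ->
  kset_in (fun n => n) d (map M2 r) -> bounded_by (y (map M2 r)) (B a).
Hypothesis hL : forall a,
  (1 <= L a)%nat /\ (B a <= L a)%nat /\ (INR (B a) + 1) * del (L a) <= / INR (S a).

Definition head_set (u : list nat) : list nat := map M2 (prefix d u).

Definition tail_set (u : list nat) (n : nat) : list nat :=
  map (fun i => M (spread B L (nth (d + i) u 0%nat) + n)) (seq 0 k).

Definition lifted (u : list nat) : X :=
  vsum X (B (nth d u 0%nat)) (fun n => vscal X (y (head_set u) n) (x (tail_set u n))).

Lemma nth_tail_set u n i : (i < k)%nat ->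
  nth i (tail_set u n) 0%nat = M (spread B L (nth (d + i) u 0%nat) + n).
Proof. apply (nth_map_seq (fun i => M (spread B L (nth (d + i) u 0%nat) + n))). Qed.

Section Family.

Variables (m : nat) (u : nat -> list nat) (a : nat -> R).
Hypotheses (hm : (1 <= m)%nat) (hu : plegma (fun n => n) (k + d) m u)
  (ha : forall j, (j < m)%nat -> -1 <= a j <= 1).

Local Notation head_vec j := (y (head_set (u j))).

Definition pivot : nat := nth d (u 0%nat) 0%nat.
Definition owner : nat -> nat := block_index m (fun j => head_vec j).
Definition scale : R := INR (B pivot) + 1.
Definition merged_coef (n : nat) : R := a (owner n) * head_vec (owner n) n / scale.
Definition merged_set (n : nat) : list nat := tail_set (u (owner n)) n.

Lemma scale_pos : 0 < scale.
Proof. unfold scale. pose proof (pos_INR (B pivot)). lra. Qed.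

Lemma head_lt_pivot j i : (j < m)%nat -> (i < d)%nat -> (nth i (u j) 0 < pivot)%nat.
Proof.
  intros Hj Hi.
  pose proof (plegma_cross_lt _ _ _ _ hu i j 0 ltac:(lia) Hj ltac:(lia)).
  pose proof (plegma_row_le _ _ _ _ hu 0 (S i) d ltac:(lia) ltac:(lia) ltac:(lia)).
  unfold pivot. lia.
Qed.

Lemma pivot_le_tail j i : (j < m)%nat -> (i < k)%nat -> (pivot <= nth (d + i) (u j) 0)%nat.
Proof.
  intros Hj Hi.
  pose proof (plegma_row_le _ _ _ _ hu 0 d (d + i) ltac:(lia) ltac:(lia) ltac:(lia)).
  pose proof (plegma_col_le _ _ _ _ hu (d + i) 0 j ltac:(lia) ltac:(lia) Hj).
  unfold pivot. lia.
Qed.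

Lemma head_plegma : plegma M2 d m (fun j => head_set (u j)).
Proof. apply (plegma_map_prefix M2 (k + d)); auto. lia. Qed.

Lemma head_vec_bounded j : (j < m)%nat -> bounded_by (head_vec j) (B pivot).
Proof.
  intros Hj. apply hB.
  - unfold prefix. rewrite length_map, length_seq. reflexivity.
  - apply Forall_forall. intros z Hz. unfold prefix in Hz.
    apply in_map_iff in Hz as [i [<- Hi]]. apply in_seq in Hi. apply head_lt_pivot; lia.
  - apply (kset_in_id M2), (proj1 head_plegma j Hj).
Qed.

Lemma head_block_sequence : block_sequence m (fun j => head_vec j).
Proof.
  intros j j' n n' Hjj' Hj'.
  apply hy_block. exact (plegma_pair M2 d m _ head_plegma j j' Hjj' Hj').
Qed.

Lemma owner_lt n : (owner n < m)%nat.
Proof. apply block_index_lt, hm. Qed.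

Lemma head_vec_off_owner j n : (j < m)%nat -> j <> owner n -> head_vec j n = 0.
Proof. apply (block_index_other m _ head_block_sequence). Qed.

Lemma head_vec_beyond j n : (j < m)%nat -> (B pivot <= n)%nat -> head_vec j n = 0.
Proof.
  intros Hj Hn. destruct (Req_EM_T (head_vec j n) 0) as [E|E]; [exact E|].
  pose proof (proj1 (head_vec_bounded j Hj n) E). lia.
Qed.

Lemma lifted_lincomb :
  lincomb X m a (fun j => lifted (u j)) =
  vscal X scale (lincomb X (B pivot) merged_coef (fun n => x (merged_set n))).
Proof.
  rewrite !lincomb_vsum, vscal_vsum.
  transitivity (vsum X m (fun j => vsum X (B pivot)
    (fun n => vscal X (a j * head_vec j n) (x (tail_set (u j) n))))).
  - apply vsum_ext. intros j Hj. unfold lifted.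
    rewrite (vsum_widen X (B pivot) (B (nth d (u j) 0%nat))).
    + rewrite vscal_vsum. apply vsum_ext. intros n _. apply vscal_assoc.
    + intros n Hn. rewrite head_vec_beyond by assumption. apply vscal_0_l.
    + apply hB_mono. rewrite <- (Nat.add_0_r d) at 1. apply pivot_le_tail; lia.
  - rewrite vsum_exchange. apply vsum_ext. intros n _.
    rewrite vscal_assoc, (vsum_single X m _ (owner n) (owner_lt n)).
    + unfold merged_coef, merged_set. f_equal. field. apply Rgt_not_eq, scale_pos.
    + intros j Hj Hne. rewrite head_vec_off_owner, Rmult_0_r by assumption. apply vscal_0_l.
Qed.

Lemma head_lincombf :
  lincombf m a (fun j => head_vec j) = fun i => scale * trunc (B pivot) merged_coef i.
Proof.
  apply functional_extensionality. intros i. unfold trunc.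
  destruct (Nat.ltb i (B pivot)) eqn:E.
  - rewrite (lincombf_single m a _ i (owner i) (owner_lt i)).
    + unfold merged_coef. field. apply Rgt_not_eq, scale_pos.
    + intros j Hj Hne. apply head_vec_off_owner; assumption.
  - apply Nat.ltb_ge in E. rewrite lincombf_eq0; [ring|].
    intros j Hj. apply head_vec_beyond; assumption.
Qed.

Lemma merged_coef_bounded n : -1 <= merged_coef n <= 1.
Proof.
  pose proof scale_pos as Hs. pose proof (ha (owner n) (owner_lt n)) as Ha.
  pose proof (proj2 (head_vec_bounded (owner n) (owner_lt n) n)) as Hy.
  unfold merged_coef. set (q := a (owner n) * head_vec (owner n) n).
  assert (Hq : Rabs q <= INR (B pivot)).
  { unfold q. rewrite Rabs_mult, <- (Rmult_1_l (INR (B pivot))).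
    apply Rmult_le_compat; try apply Rabs_pos; [apply Rabs_le; lra|exact Hy]. }
  assert (q = q / scale * scale) by (field; lra).
  unfold scale in *. revert Hq. unfold Rabs. destruct (Rcase_abs q); intros; nra.
Qed.

Lemma below_block_length j i n : (j < m)%nat -> (i < k)%nat -> (n < B pivot)%nat ->
  (n < B (nth (d + i) (u j) 0))%nat.
Proof. intros Hj Hi Hn. pose proof (hB_mono _ _ (pivot_le_tail j i Hj Hi)). lia. Qed.

Lemma merged_plegma : plegma M k (B pivot) merged_set.
Proof.
  unfold merged_set. split; [|split].
  - intros n Hn. split; [|split].
    + unfold tail_set. rewrite length_map, length_seq. reflexivity.
    + intros i Hi. rewrite !nth_tail_set by lia. apply hM.
      enough (spread B L (nth (d + i) (u (owner n)) 0%nat) + n <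
              spread B L (nth (d + S i) (u (owner n)) 0%nat))%nat by lia.
      apply spread_gap.
      * apply (plegma_row_lt _ _ _ _ hu); [apply owner_lt|lia|lia].
      * apply below_block_length; [apply owner_lt|lia|exact Hn].
    + intros i Hi. rewrite nth_tail_set by exact Hi. eauto.
  - intros i n Hi Hn. rewrite !nth_tail_set by exact Hi. apply hM.
    destruct (proj1 (Nat.lt_eq_cases _ _) (block_index_mono m (fun j => head_vec j) n (S n)
      (Nat.le_succ_diag_r n))) as [Hlt|Heq].
    + pose proof (spread_gap B L (nth (d + i) (u (owner n)) 0%nat)
        (nth (d + i) (u (owner (S n))) 0%nat) n) as Hgap.
      enough (spread B L (nth (d + i) (u (owner n)) 0%nat) + n <
              spread B L (nth (d + i) (u (owner (S n))) 0%nat))%nat by lia.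
      apply Hgap.
      * apply (plegma_col_lt _ _ _ _ hu); [lia|exact Hlt|apply owner_lt].
      * apply below_block_length; [apply owner_lt|exact Hi|lia].
    + unfold owner. rewrite Heq. lia.
  - intros HT i Hi. rewrite !nth_tail_set by lia. apply hM.
    enough (spread B L (nth (d + i) (u (owner (pred (B pivot)))) 0%nat) + pred (B pivot) <
            spread B L (nth (d + S i) (u (owner 0%nat)) 0%nat))%nat by lia.
    apply spread_gap.
    + rewrite Nat.add_succ_r. apply (plegma_cross_lt _ _ _ _ hu); [lia|apply owner_lt..].
    + apply below_block_length; [apply owner_lt|lia|lia].
Qed.

Lemma merged_start : (M (pred (L pivot)) <= nth 0 (merged_set 0%nat) 0)%nat.
Proof.
  unfold merged_set. rewrite nth_tail_set by lia. apply strictly_increasing_le; [exact hM|].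
  pose proof (spread_ge B L pivot).
  pose proof (spread_mono B L _ _ (pivot_le_tail (owner 0%nat) 0 (owner_lt 0) ltac:(lia))).
  lia.
Qed.

Lemma lifted_estimate l : (1 <= l)%nat -> (m <= l)%nat -> (pred l <= nth 0 (u 0%nat) 0)%nat ->
  Rabs (vnorm X (lincomb X m a (fun j => lifted (u j))) - Nt (trunc m a)) <= / INR (S l) + del2 l.
Proof.
  intros Hl Hml Hstart.
  destruct (hL pivot) as [HL1 [HL2 HL3]].
  pose proof (hx (L pivot) (B pivot) merged_set merged_coef HL1 HL2 merged_plegma merged_start
    (fun n _ => merged_coef_bounded n)) as Hmerged.
  assert (Hhead_start : (M2 (pred l) <= nth 0 (head_set (u 0%nat)) 0)%nat).
  { unfold head_set. rewrite nth_map_prefix by lia. apply strictly_increasing_le; assumption. }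
  pose proof (hy l m (fun j => head_set (u j)) a Hl Hml head_plegma Hhead_start ha) as Hhead.
  cbv beta in Hhead. rewrite head_lincombf, (proj2 hN) in Hhead
    by (exists (B pivot); intros n Hn; unfold trunc; destruct (Nat.ltb_spec n (B pivot)); lia || reflexivity).
  rewrite lifted_lincomb, vnorm_scal.
  pose proof scale_pos as Hs. rewrite (Rabs_pos_eq scale) in Hhead |- * by lra.
  assert (Hpivot : / INR (S pivot) <= / INR (S l)).
  { apply Rinv_le_contravar; [apply lt_0_INR; lia|apply le_INR].
    pose proof (plegma_row_lt _ _ _ _ hu 0 0 d ltac:(lia) ltac:(lia) ltac:(lia)).
    unfold pivot. lia. }
  set (A := vnorm X (lincomb X (B pivot) merged_coef (fun n => x (merged_set n)))) in *.
  set (C := N (trunc (B pivot) merged_coef)) in *.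
  assert (Hscaled : Rabs (scale * A - scale * C) <= / INR (S l)).
  { replace (scale * A - scale * C) with (scale * (A - C)) by ring.
    rewrite Rabs_mult, Rabs_pos_eq by lra.
    apply Rle_trans with (scale * del (L pivot)); [apply Rmult_le_compat_l; lra|].
    unfold scale. lra. }
  pose proof (Rabs_triang (scale * A - scale * C) (scale * C - Nt (trunc m a))) as Htri.
  replace (scale * A - scale * C + (scale * C - Nt (trunc m a))) with (scale * A - Nt (trunc m a))
    in Htri by ring.
  lra.
Qed.

End Family.

End Lift.

Theorem mainTheorem8 (X : BanachSpace) (k : nat) (hk : (1 <= k)%nat)
  (N : (nat -> R) -> R) (hSM : in_SM k X N) (hbasic : schauder_basic N)
  (d : nat) (hd : (1 <= d)%nat) (Nt : (nat -> R) -> R)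
  (hpb : plegma_block_generated_SM d N Nt) :
  in_SM (k + d) X Nt.
Proof.
  destruct hSM as [hN [x [M [hM [del [hdel_pos [hdel_cv hx]]]]]]].
  destruct hpb as [hNt [y [M2 [[hy_fin hy_block] [hM2 [del2 [hdel2_pos [hdel2_cv hy]]]]]]]].
  destruct (finsupp_family_bound d (fun r => y (map M2 r))
    (fun r => kset_in (fun n => n) d (map M2 r)) (fun r => hy_fin (map M2 r)))
    as [B [hB_mono hB]].
  destruct (small_tail_choice del B hdel_pos hdel_cv) as [L hL].
  split; [exact hNt|].
  exists (lifted X k d x M y M2 B L), (fun n => n).
  split; [intros i j Hij; exact Hij|].
  exists (fun l => / INR (S l) + del2 l). split; [|split].
  - intros l. pose proof (inv_succ_pos l). pose proof (hdel2_pos l). lra.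
  - rewrite <- (Rplus_0_r 0). exact (CV_plus _ _ _ _ inv_succ_cv0 hdel2_cv).
  - intros l m u a Hl Hml Hu Hstart Ha.
    destruct (Nat.eq_dec m 0) as [->|Hm].
    + cbn [lincomb]. rewrite vnorm_vzero, seminorm_trunc0, Rminus_0_r, Rabs_R0 by exact hNt.
      pose proof (inv_succ_pos l). pose proof (hdel2_pos l). lra.
    + exact (lifted_estimate X k d hk hd N Nt hN x M del hM hx y M2 del2 hy_block hM2 hy
        B L hB_mono hB hL m u a ltac:(lia) Hu Ha l Hl Hml Hstart).
Qed.
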